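(* Let ${\bf B}$ and ${\bf C}$ be $n\times n$ matrices with non-negative entries, and let ${\bf A}$ be an $n\times n$ complex matrix satisfying $|[{\bf A}]_{i,j}|\le\sqrt{[{\bf B}]_{i,j}}\sqrt{[{\bf C}]_{i,j}}$ for all $i,j$. Then $\rho({\bf A})\le\sqrt{\rho({\bf B})}\sqrt{\rho({\bf C})}$. If furthermore $\max(\rho({\bf B}),\rho({\bf C}))<1$, then $\rho({\bf A})<1$ and $$\|({\bf I}_n-{\bf A})^{-1}\|_\infty\le\sqrt{\|({\bf I}_n-{\bf B})^{-1}\|_\infty}\sqrt{\|({\bf I}_n-{\bf C})^{-1}\|_\infty}.$$
   Context: $\rho(\cdot)$ denotes the spectral radius and $\|{\bf M}\|_\infty=\max_i\sum_j|M_{ij}|$. *)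

From HB Require Import structures.
From mathcomp Require Import all_boot all_order all_algebra.
From mathcomp Require Import classical_sets reals.
From mathcomp.real_closed Require Import complex.
Set Implicit Arguments. Unset Strict Implicit. Unset Printing Implicit Defensive.
Import Order.TTheory GRing.Theory Num.Theory.
Local Open Scope ring_scope.
Local Open Scope classical_set_scope.

(* Spectral radius of a complex square matrix: the largest modulus of an
   eigenvalue (sup of the finite set of moduli; 0 when n = 0). *)
Definition specrad (R : realType) (n : nat) (A : 'M[R[i]]_n) : R :=
  sup [set ComplexField.Normc.normc z | z in [set z : R[i] | eigenvalue A z]].

Definition normInfC (R : realType) (m n : nat) (M : 'M[R[i]]_(m, n)) : R :=
  \big[Num.max/0]_(i < m) \sum_(j < n) ComplexField.Normc.normc (M i j).

Definition normInfR (R : realType) (m n : nat) (M : 'M[R]_(m, n)) : R :=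
  \big[Num.max/0]_(i < m) \sum_(j < n) `|M i j|.

Definition cmx (R : realType) (m n : nat) (M : 'M[R]_(m, n)) : 'M[R[i]]_(m, n) :=
  map_mx (fun x : R => (x%:C)%C) M.

From HB Require Import structures.
From mathcomp Require Import all_boot all_order all_algebra.
From mathcomp Require Import classical_sets reals.
From mathcomp.real_closed Require Import complex.
From mathcomp Require Import ring lra.
Set Implicit Arguments. Unset Strict Implicit. Unset Printing Implicit Defensive.
Import Order.TTheory GRing.Theory Num.Theory.
Local Open Scope ring_scope.

(* By induction on k and Cauchy-Schwarz, |(A^k)_ij| <= sqrt((B^k)_ij) sqrt((C^k)_ij).
   The entries of M^k are O(r^k) for every r > rho(M): by Cayley-Hamilton the
   characteristic polynomial, split into linear factors, annihilates M, and each
   factor X - z with |z| <= rho(M) costs at most a polynomial factor.  So if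
   v A = z v with v <> 0, then |z|^k |v_j| = |(v A^k)_j| = O((sqrt rB sqrt rC)^k)
   for all rB > rho(B), rC > rho(C), which gives the first inequality.  When
   rho(B), rho(C) < 1, the partial sums of the Neumann series approximate
   (I - M)^-1 entrywise up to an O(r^N) tail; summing the entrywise bound over
   k < N and applying Cauchy-Schwarz gives
   |((I - A)^-1)_ij| <= sqrt(((I - B)^-1)_ij) sqrt(((I - C)^-1)_ij), and a last
   Cauchy-Schwarz along each row bounds the infinity norms. *)

Section PowerBounds.
Variable R : realFieldType.
Implicit Types (r t : R).

Lemma natr_mul_expr_le t r k : 0 < t -> t <= r ->
  k%:R * t ^+ k * (r - t) <= t * r ^+ k.
Proof.
move=> t0 tr; elim: k => [|k IH]; first by rewrite !mul0r mulr_ge0 // ltW.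
have tk : t ^+ k <= r ^+ k by rewrite lerXn2r // nnegrE ltW //; lra.
have h1 := ler_wpM2l (ltW t0) IH.
have h2 := ler_wpM2l (ltW t0) (ler_wpM2r (_ : 0 <= r - t) tk).
rewrite -natr1 !exprS; move: h1 h2; set T := t ^+ k; set S := r ^+ k.
by set m := k%:R => h1 h2; nra.
Qed.

End PowerBounds.

Section GeometricBounds.
Variable R : archiRealFieldType.
Implicit Types (c d q x y K : R).

Lemma geometric_small q c d : 0 < q -> q < 1 -> 0 < d ->
  exists N0, forall N, (N0 <= N)%N -> c * q ^+ N <= d.
Proof.
move=> q0 q1 d0; have [c0|c0] := lerP c 0.
  by exists 0%N; move=> N _; rewrite (le_trans _ (ltW d0)) // mulr_le0_ge0 // exprn_ge0 // ltW.
(* Since N q^N (1 - q) <= q, any N beyond c q / ((1 - q) d) will do. *)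
have qd : 0 < (1 - q) * d by rewrite mulr_gt0 // subr_gt0.
have cq : 0 <= c * q / ((1 - q) * d) by rewrite divr_ge0 ?(ltW qd) // mulr_ge0 // ltW.
exists (Num.bound (c * q / ((1 - q) * d))); move=> N hN.
have hb := archi_boundP cq; rewrite ltr_pdivrMr // in hb.
have hN' : (Num.bound (c * q / ((1 - q) * d)))%:R <= N%:R :> R by rewrite ler_nat.
have := natr_mul_expr_le N q0 (ltW q1); rewrite expr1n mulr1.
have qN : 0 <= q ^+ N by rewrite exprn_ge0 // ltW.
move: hb hN' qN; set b := (Num.bound _)%:R; set m := N%:R; set Q := q ^+ N.
move=> hb hN' qN h; have mq : 0 < m * (1 - q) by nra.
nra.
Qed.

Lemma le_of_geometric_bound x y c K : 0 <= x -> 0 < y -> 0 < c ->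
  (forall k, x ^+ k * c <= K * y ^+ k) -> x <= y.
Proof.
move=> x0 y0 c0 H; rewrite leNgt; apply/negP => yx.
have q0 : 0 < y / x by rewrite divr_gt0 //; lra.
have q1 : y / x < 1 by rewrite ltr_pdivrMr ?mul1r //; lra.
have c2 : 0 < c / 2 by lra.
have [N /(_ N (leqnn N))] := geometric_small K q0 q1 c2.
have xN : 0 < x ^+ N by rewrite exprn_gt0 //; lra.
rewrite expr_div_n mulrA ler_pdivrMr // => h.
have := H N; move: h xN; set X := x ^+ N; set Y := y ^+ N => h xN.
nra.
Qed.

End GeometricBounds.

Section SqrtBounds.
Variable R : rcfType.
Implicit Types (b c e x : R).

Lemma sqrtrD_le b c : 0 <= b -> 0 <= c ->
  Num.sqrt (b + c) <= Num.sqrt b + Num.sqrt c.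
Proof.
move=> b0 c0; have sb := sqrtr_ge0 b; have sc := sqrtr_ge0 c.
rewrite -[leRHS]ger0_norm ?addr_ge0 // -sqrtr_sqr ler_sqrt ?sqr_ge0 //.
by rewrite sqrrD !sqr_sqrtr //; have := mulr_ge0 sb sc; lra.
Qed.

Lemma sqrtrX b k : 0 <= b -> Num.sqrt (b ^+ k) = Num.sqrt b ^+ k.
Proof.
move=> b0; elim: k => [|k IH]; first by rewrite !expr0 sqrtr1.
by rewrite !exprS sqrtrM // IH.
Qed.

Lemma ler_sqrtM_addgt0 x b c : 0 <= b -> 0 <= c ->
  (forall e, 0 < e -> x <= Num.sqrt (b + e) * Num.sqrt (c + e) + e) ->
  x <= Num.sqrt b * Num.sqrt c.
Proof.
move=> b0 c0 H; apply/ler_addgt0Pr => e e0.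
have sb := sqrtr_ge0 b; have sc := sqrtr_ge0 c.
set M := Num.sqrt b + Num.sqrt c + 2.
have M0 : 0 < M by rewrite /M; lra.
set s := Num.min 1 (e / M).
have s0 : 0 < s by rewrite lt_min ltr01 divr_gt0.
have s1 : s <= 1 by rewrite ge_min lexx.
have sM : s * M <= e by rewrite -ler_pdivlMr // ge_min lexx orbT.
(* Taking e := s^2 and using sqrt (a + s^2) <= sqrt a + s, the hypothesis
   becomes x <= sqrt b * sqrt c + s * M. *)
have sqrt_s2 a : 0 <= a -> Num.sqrt (a + s ^+ 2) <= Num.sqrt a + s.
  move=> a0; apply: le_trans (sqrtrD_le a0 (sqr_ge0 s)) _.
  by rewrite sqrtr_sqr ger0_norm // ltW.
have := H _ (exprn_gt0 2 s0).
have := ler_pM (sqrtr_ge0 _) (sqrtr_ge0 _) (sqrt_s2 _ b0) (sqrt_s2 _ c0).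
rewrite /M in sM; move: (Num.sqrt (b + _)) (Num.sqrt (c + _)) => u v.
rewrite expr2; nra.
Qed.

Lemma sum_sqrtM_le n (f g : 'I_n -> R) : (forall l, 0 <= f l) -> (forall l, 0 <= g l) ->
  \sum_l Num.sqrt (f l) * Num.sqrt (g l) <=
  Num.sqrt (\sum_l f l) * Num.sqrt (\sum_l g l).
Proof.
move=> f0 g0.
set S := \sum_l _; set P := \sum_l f l; set Q := \sum_l g l.
have P0 : 0 <= P by rewrite sumr_ge0.
have Q0 : 0 <= Q by rewrite sumr_ge0.
have S0 : 0 <= S by rewrite sumr_ge0 // => l _; rewrite mulr_ge0 ?sqrtr_ge0.
have [Pz|Pn0] := eqVneq P 0.
  have fz l : f l = 0.
    by move/eqP: Pz; rewrite psumr_eq0 // => /allP/(_ l (mem_index_enum _))/eqP.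
  rewrite Pz sqrtr0 mul0r /S big1 // => l _.
  by rewrite fz sqrtr0 mul0r.
have Pp : 0 < P by rewrite lt_def Pn0 P0.
rewrite -sqrtrM // -(ger0_norm S0) -sqrtr_sqr ler_sqrt ?mulr_ge0 //.
have E : \sum_l (S * Num.sqrt (f l) - P * Num.sqrt (g l)) ^+ 2 = P * (P * Q - S ^+ 2).
  rewrite (eq_bigr (fun l => S ^+ 2 * f l - (2 * S * P) * (Num.sqrt (f l) * Num.sqrt (g l))
                       + P ^+ 2 * g l)); last first.
    move=> l _; have := sqr_sqrtr (f0 l); have := sqr_sqrtr (g0 l).
    move: (Num.sqrt (f l)) (Num.sqrt (g l)) => x y <- <-; ring.
  rewrite big_split sumrB /= -!mulr_sumr -/P -/Q -/S; ring.
have : 0 <= P * (P * Q - S ^+ 2) by rewrite -E sumr_ge0 // => l _; exact: sqr_ge0.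
by rewrite pmulr_rge0 // subr_ge0.
Qed.

End SqrtBounds.

Section ComplexModulus.
Variable R : rcfType.
Local Notation normc := (@ComplexField.Normc.normc R).

Lemma normc_ge0 (z : R[i]) : 0 <= normc z.
Proof. by case: z => a b; exact: sqrtr_ge0. Qed.

Lemma normc_gt0 (z : R[i]) : z != 0 -> 0 < normc z.
Proof.
move=> z0; rewrite lt_def normc_ge0 andbT.
by apply: contra z0 => /eqP/ComplexField.Normc.eq0_normc ->.
Qed.

Lemma normc_real (x : R) : normc (x%:C)%C = `|x|.
Proof. by rewrite /ComplexField.Normc.normc /= expr0n addr0 sqrtr_sqr. Qed.

Lemma normcX (z : R[i]) k : normc (z ^+ k) = normc z ^+ k.
Proof.
elim: k => [|k IH]; first by rewrite !expr0 ComplexField.Normc.normc1.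
by rewrite !exprS ComplexField.Normc.normcM IH.
Qed.

Lemma ler_normc_sum (I : Type) (s : seq I) (P : pred I) (F : I -> R[i]) :
  normc (\sum_(i <- s | P i) F i) <= \sum_(i <- s | P i) normc (F i).
Proof.
elim/big_ind2: _ => [|x1 y1 x2 y2 h1 h2|//]; first by rewrite ComplexField.Normc.normc0.
exact: le_trans (le_normcD _ _) (lerD h1 h2).
Qed.

Lemma normc_mulmx_le m n p (P : 'M[R[i]]_(m, n)) (Q : 'M_(n, p)) e i j :
  (forall l j, normc (Q l j) <= e) ->
  normc ((P *m Q) i j) <= (\sum_l normc (P i l)) * e.
Proof.
move=> hQ; rewrite mxE mulr_suml; apply: le_trans (ler_normc_sum _ _ _) _.
by apply: ler_sum => l _; rewrite ComplexField.Normc.normcM ler_wpM2l ?normc_ge0.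
Qed.

Definition pow_dominated m p (M : 'M[R[i]]_m) (X : 'M_(m, p)) (r : R) :=
  exists2 K, 0 <= K & forall k i j, normc ((M ^+ k *m X) i j) <= K * r ^+ k.

Lemma powmx_linear_growth m p (M : 'M[R[i]]_m) (X : 'M_(m, p)) z t a K :
  0 < t -> normc z <= t -> (forall i j, normc (X i j) <= a) ->
  (forall k i j, normc ((M ^+ k *m (M *m X - z *: X)) i j) <= K * t ^+ k) ->
  forall k i j, normc ((M ^+ k *m X) i j) <= (a + k%:R * (K / t)) * t ^+ k.
Proof.
move=> t0 zt aX HK; elim=> [|k IH] i j.
  by rewrite expr0 mul1mx mul0r addr0 expr0 mulr1.
set Y := M *m X - z *: X.
have -> : M ^+ k.+1 *m X = z *: (M ^+ k *m X) + M ^+ k *m Y.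
  by rewrite exprSr -mulmxE -mulmxA /Y mulmxBr -scalemxAr addrC subrK.
rewrite mxE [X in normc (X + _)]mxE.
apply: le_trans (le_normcD _ _) _; rewrite ComplexField.Normc.normcM.
have hz := ler_pM (normc_ge0 _) (normc_ge0 _) zt (IH i j).
have hY := HK k i j; rewrite -[K](mulfVK (lt0r_neq0 t0)) in hY.
move: hz hY; rewrite exprS -natr1; move: (t ^+ k) (K / t) (k%:R) => T L m' hz hY.
nra.
Qed.

Lemma pow_dominated_factor m p (M : 'M[R[i]]_m) (X : 'M_(m, p)) z t r :
  0 < t -> t < r -> normc z <= t ->
  pow_dominated M (M *m X - z *: X) t -> pow_dominated M X r.
Proof.
move=> t0 tr zt [K K0 HK].
set a := \big[Num.max/0]_i \big[Num.max/0]_j normc (X i j).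
have a0 : 0 <= a by exact: bigmax_ge_id.
have aX i j : normc (X i j) <= a.
  exact: le_trans (le_bigmax _ _ j) (le_bigmax _ (fun i => \big[Num.max/0]_j _) i).
have growth := powmx_linear_growth t0 zt aX HK.
exists (a + K / (r - t)); first by rewrite addr_ge0 // divr_ge0 // subr_ge0 ltW.
move=> k i j; apply: le_trans (growth k i j) _.
rewrite mulrDl [leRHS]mulrDl; apply: lerD.
  by rewrite ler_wpM2l // lerXn2r ?nnegrE ?ltW // (lt_trans t0).
have hk : k%:R * t ^+ k <= t / (r - t) * r ^+ k.
  by rewrite mulrAC ler_pdivlMr ?subr_gt0 // natr_mul_expr_le // ltW.
have -> : K / (r - t) * r ^+ k = K / t * (t / (r - t) * r ^+ k).
  by rewrite !mulrA mulfVK ?lt0r_neq0.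
rewrite [leLHS](_ : _ = K / t * (k%:R * t ^+ k)); last by ring.
by rewrite ler_wpM2l // divr_ge0 // ltW.
Qed.

Lemma pow_dominated_root_prod m p (M : 'M[R[i]]_m.+1) (s : seq R[i])
    (X : 'M_(m.+1, p)) rho r :
  0 <= rho -> rho < r -> (forall z, z \in s -> normc z <= rho) ->
  horner_mx M (\prod_(z <- s) ('X - z%:P)) *m X = 0 -> pow_dominated M X r.
Proof.
move=> rho0; elim: s X r => [|z s IH] X r rho_r hs.
  rewrite big_nil rmorph1 mul1mx => ->; exists 0 => // k i j.
  by rewrite mulmx0 mxE ComplexField.Normc.normc0 mul0r.
rewrite big_cons mulrC rmorphM /= rmorphB /= horner_mx_X horner_mx_C.
rewrite -mulmxE -mulmxA mulmxBl mul_scalar_mx => hY.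
have zrho : normc z <= rho by rewrite hs ?mem_head.
(* Each linear factor costs a factor k, paid for by shrinking the radius
   handed to the remaining factors from r to (rho + r) / 2. *)
apply: (@pow_dominated_factor _ _ _ _ z ((rho + r) / 2)); try lra.
by apply: IH hY; [lra | move=> w ws; rewrite hs // in_cons ws orbT].
Qed.

End ComplexModulus.

Section SpectralRadius.
Variable R : realType.
Local Notation normc := (@ComplexField.Normc.normc R).
Local Open Scope classical_set_scope.

Lemma char_poly_split n (M : 'M[R[i]]_n) : exists2 s : seq R[i],
  char_poly M = \prod_(z <- s) ('X - z%:P) & forall z, eigenvalue M z = (z \in s).
Proof.
have [s E] := closed_field_poly_normal (char_poly M).
rewrite (monicP (char_poly_monic M)) scale1r in E.
by exists s => // z; rewrite eigenvalue_root_char E root_prod_XsubC.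
Qed.

Lemma specrad0 (M : 'M[R[i]]_0) : specrad M = 0.
Proof.
rewrite /specrad [X in sup X](_ : _ = set0) ?sup0 //.
apply/seteqP; split => x // [z] /=.
by rewrite /eigenvalue /eigenspace [kermx _]flatmx0 eqxx.
Qed.

Lemma normc_le_specrad n (M : 'M[R[i]]_n) z : eigenvalue M z -> normc z <= specrad M.
Proof.
move=> Mz; have [s _ Es] := char_poly_split M.
apply: sup_upper_bound; last by exists z.
split; first by exists (normc z), z.
exists (\sum_(w <- s) normc w) => _ [w /= Mw <-].
rewrite Es in Mw; rewrite (big_rem w) //= lerDl sumr_ge0 // => *; exact: normc_ge0.
Qed.

Lemma specrad_le n (M : 'M[R[i]]_n) x : 0 <= x ->
  (forall z, eigenvalue M z -> normc z <= x) -> specrad M <= x.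
Proof.
case: n M => [|n] M x0 H; first by rewrite specrad0.
have [a Ma] := Theorem7' M (ltn0Sn n).
by apply: ge_sup; [exists (normc a), a | move=> _ [w /= Mw <-]; exact: H].
Qed.

Lemma specrad_ge0 n (M : 'M[R[i]]_n) : 0 <= specrad M.
Proof.
case: n M => [|n] M; first by rewrite specrad0.
have [a Ma] := Theorem7' M (ltn0Sn n).
exact: le_trans (normc_ge0 a) (normc_le_specrad Ma).
Qed.

Lemma specrad_lt1_unitmx n (M : 'M[R[i]]_n) : specrad M < 1 -> (1%:M - M) \in unitmx.
Proof.
move=> lt1; apply: contraT => singular.
have M1 : eigenvalue M 1.
  rewrite /eigenvalue /eigenspace kermx_eq0 row_free_unit -opprB -scaleN1r.
  by rewrite unitmxZ ?unitrN1.
by have := normc_le_specrad M1; rewrite ComplexField.Normc.normc1; lra.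
Qed.

Lemma specrad_powmx_bound n (M : 'M[R[i]]_n) r : specrad M < r ->
  exists2 K, 0 <= K & forall k i j, normc ((M ^+ k) i j) <= K * r ^+ k.
Proof.
case: n M => [|m] M lt_r; first by exists 0 => // k [].
have [s E Es] := char_poly_split M.
have CH : horner_mx M (\prod_(z <- s) ('X - z%:P)) *m 1%:M = 0.
  by rewrite -E Cayley_Hamilton mul0mx.
have [|K K0 HK] := pow_dominated_root_prod (specrad_ge0 M) lt_r _ CH.
  by move=> z; rewrite -Es; exact: normc_le_specrad.
by exists K => // k i j; rewrite -[M ^+ k]mulmx1.
Qed.

End SpectralRadius.

Lemma invmx_1B_partial (K : comUnitRingType) n (X : 'M[K]_n) N :
  (1%:M - X) \in unitmx ->
  invmx (1%:M - X) = \sum_(k < N) X ^+ k + invmx (1%:M - X) *m X ^+ N.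
Proof.
move=> unitX.
have geom : (1%:M - X) *m (\sum_(k < N) X ^+ k) = 1%:M - X ^+ N.
  elim: N => [|N IH]; first by rewrite big_ord0 mulmx0 expr0 subrr.
  by rewrite big_ord_recr /= mulmxDr IH exprS mulmxBl mul1mx -mulmxE addrA subrK.
have id_split : 1%:M = (1%:M - X) *m (\sum_(k < N) X ^+ k) + X ^+ N.
  by rewrite geom subrK.
rewrite -[LHS]mulmx1 [X in _ *m X = _]id_split mulmxDr mulmxA.
by rewrite mulVmx // mul1mx.
Qed.

Lemma powmx_ge0 (R : numDomainType) n (X : 'M[R]_n) k :
  (forall i j, 0 <= X i j) -> forall i j, 0 <= (X ^+ k) i j.
Proof.
move=> X0; elim: k => [|k IH] i j; first by rewrite expr0 mxE ler0n.
by rewrite exprSr -mulmxE mxE sumr_ge0 // => l _; exact: mulr_ge0.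
Qed.

Section NeumannSeries.
Variable R : realType.
Local Notation normc := (@ComplexField.Normc.normc R).

Lemma row_sum_le_normInfR m n (X : 'M[R]_(m, n)) i : \sum_j X i j <= normInfR X.
Proof.
apply: le_trans (le_bigmax _ (fun i => \sum_j `|X i j|) i).
by apply: ler_sum => j _; exact: ler_norm.
Qed.

Lemma cmxX n (X : 'M[R]_n) k : cmx (X ^+ k) = cmx X ^+ k.
Proof.
elim: k => [|k IH]; first by rewrite !expr0 /cmx map_mx1.
by rewrite !exprS -!mulmxE /cmx map_mxM -[map_mx _ (X ^+ k)]/(cmx _) IH.
Qed.

Lemma real_powmx_bound n (X : 'M[R]_n) r : specrad (cmx X) < r ->
  exists2 K, 0 <= K & forall k i j, (X ^+ k) i j <= K * r ^+ k.
Proof.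
move=> lt_r; have [K K0 HK] := specrad_powmx_bound lt_r; exists K => // k i j.
apply: le_trans (ler_norm _) _.
by have := HK k i j; rewrite -cmxX /cmx mxE normc_real.
Qed.

Lemma neumann_tail_small n (X : 'M[R[i]]_n) i j d : specrad X < 1 -> 0 < d ->
  exists N0, forall N, (N0 <= N)%N -> normc ((invmx (1%:M - X) *m X ^+ N) i j) <= d.
Proof.
move=> lt1 d0; have rho0 := specrad_ge0 X.
set r := (specrad X + 1) / 2.
have lt_r : specrad X < r by rewrite /r; lra.
have [r0 r1] : 0 < r /\ r < 1 by rewrite /r; split; lra.
have [K _ HK] := specrad_powmx_bound lt_r.
have [N0 HN] := geometric_small ((\sum_l normc (invmx (1%:M - X) i l)) * K) r0 r1 d0.
exists N0 => N /HN; apply: le_trans; rewrite -mulrA; exact: normc_mulmx_le.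
Qed.

Lemma normc_invmx_1B_le_partial n (X : 'M[R[i]]_n) i j d : specrad X < 1 -> 0 < d ->
  exists N0, forall N, (N0 <= N)%N ->
    normc (invmx (1%:M - X) i j) <= \sum_(k < N) normc ((X ^+ k) i j) + d.
Proof.
move=> lt1 d0; have [N0 HN] := neumann_tail_small i j lt1 d0.
exists N0 => N /HN tail.
rewrite (invmx_1B_partial N (specrad_lt1_unitmx lt1)) mxE summxE.
exact: le_trans (le_normcD _ _) (lerD (ler_normc_sum _ _ _) tail).
Qed.

Lemma sum_powmx_le_invmx n (X : 'M[R]_n) i j d : specrad (cmx X) < 1 -> 0 < d ->
  exists N0, forall N, (N0 <= N)%N ->
    \sum_(k < N) (X ^+ k) i j <= invmx (1%:M - X) i j + d.
Proof.
move=> lt1 d0; have [N0 HN] := neumann_tail_small i j lt1 d0.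
exists N0 => N /HN.
have unitX : (1%:M - X) \in unitmx.
  have : cmx (1%:M - X) \in unitmx.
    by rewrite /cmx map_mxB map_mx1; exact: specrad_lt1_unitmx.
  by rewrite /cmx map_unitmx.
have -> : invmx (1%:M - cmx X) *m cmx X ^+ N = cmx (invmx (1%:M - X) *m X ^+ N).
  by rewrite -cmxX /cmx map_mxM map_invmx map_mxB map_mx1.
rewrite /cmx mxE normc_real => tail.
move: (congr1 (fun M : 'M[R]_n => M i j) (invmx_1B_partial N unitX)); rewrite mxE summxE => ->.
by move: tail; have := ler_norm (- (invmx (1%:M - X) *m X ^+ N) i j); rewrite normrN; lra.
Qed.

Lemma invmx_1B_ge0 n (X : 'M[R]_n) : (forall i j, 0 <= X i j) ->
  specrad (cmx X) < 1 -> forall i j, 0 <= invmx (1%:M - X) i j.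
Proof.
move=> X0 lt1 i j; apply/ler_addgt0Pr => d d0.
have [N0 HN] := sum_powmx_le_invmx i j lt1 d0.
apply: le_trans (HN N0 (leqnn _)); apply: sumr_ge0 => k _; exact: powmx_ge0.
Qed.

End NeumannSeries.

Section EntrywiseDomination.
Variables (R : realType) (n : nat) (A : 'M[R[i]]_n) (B C : 'M[R]_n).
Local Notation normc := (@ComplexField.Normc.normc R).
Hypothesis B0 : forall i j, 0 <= B i j.
Hypothesis C0 : forall i j, 0 <= C i j.
Hypothesis normA : forall i j, normc (A i j) <= Num.sqrt (B i j) * Num.sqrt (C i j).

Lemma normc_powmx_le k i j :
  normc ((A ^+ k) i j) <= Num.sqrt ((B ^+ k) i j) * Num.sqrt ((C ^+ k) i j).
Proof.
elim: k i j => [|k IH] i j.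
  rewrite !expr0 !mxE; case: (i == j); rewrite ?mulr1n ?mulr0n.
    by rewrite ComplexField.Normc.normc1 sqrtr1 mulr1.
  by rewrite ComplexField.Normc.normc0 sqrtr0 mulr0.
rewrite !exprSr -!mulmxE !mxE; apply: le_trans (ler_normc_sum _ _ _) _.
apply: le_trans (sum_sqrtM_le _ _) => [|l|l]; last 2 first.
- by rewrite mulr_ge0 // powmx_ge0.
- by rewrite mulr_ge0 // powmx_ge0.
apply: ler_sum => l _; rewrite ComplexField.Normc.normcM !sqrtrM ?powmx_ge0 //.
rewrite mulrACA; exact: ler_pM (normc_ge0 _) (normc_ge0 _) (IH i l) (normA l j).
Qed.

Lemma normc_eigenvalue_le z rB rC :
  specrad (cmx B) < rB -> specrad (cmx C) < rC -> eigenvalue A z ->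
  normc z <= Num.sqrt rB * Num.sqrt rC.
Proof.
move=> rB_gt rC_gt /eigenvalueP [v vA v0].
have rB0 : 0 < rB := le_lt_trans (specrad_ge0 _) rB_gt.
have rC0 : 0 < rC := le_lt_trans (specrad_ge0 _) rC_gt.
have [j0 vj0] : exists j, v 0 j != 0.
  case: (pickP (fun j => v 0 j != 0)) => [j vj | v_eq0]; first by exists j.
  by case/eqP: v0; apply/rowP => j; rewrite mxE; move/negbFE: (v_eq0 j) => /eqP.
have vApow k : v *m A ^+ k = z ^+ k *: v.
  elim: k => [|k IH]; first by rewrite !expr0 mulmx1 scale1r.
  by rewrite exprS -mulmxE mulmxA vA -scalemxAl IH scalerA -exprS.
have [KB KB0 HB] := real_powmx_bound rB_gt.
have [KC KC0 HC] := real_powmx_bound rC_gt.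
have bound k l j :
    normc ((A ^+ k) l j) <= Num.sqrt (KB * KC) * (Num.sqrt rB * Num.sqrt rC) ^+ k.
  apply: le_trans (normc_powmx_le k l j) _.
  rewrite (sqrtrM _ KB0) exprMn -(sqrtrX _ (ltW rB0)) -(sqrtrX _ (ltW rC0)) mulrACA.
  rewrite -(sqrtrM _ KB0) -(sqrtrM _ KC0).
  by apply: ler_pM; rewrite ?sqrtr_ge0 // ler_wsqrtr.
apply: (le_of_geometric_bound (c := normc (v 0 j0))
          (K := (\sum_l normc (v 0 l)) * Num.sqrt (KB * KC))).
- exact: normc_ge0.
- by rewrite mulr_gt0 // sqrtr_gt0.
- exact: normc_gt0.
move=> k; rewrite -normcX -ComplexField.Normc.normcM.
have -> : z ^+ k * v 0 j0 = (v *m A ^+ k) 0 j0 by rewrite vApow mxE.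
by rewrite -mulrA; exact: normc_mulmx_le.
Qed.

Lemma specrad_le_sqrtM :
  specrad A <= Num.sqrt (specrad (cmx B)) * Num.sqrt (specrad (cmx C)).
Proof.
have rB0 := specrad_ge0 (cmx B); have rC0 := specrad_ge0 (cmx C).
apply: specrad_le => [|z Az]; first by rewrite mulr_ge0 ?sqrtr_ge0.
apply: (ler_sqrtM_addgt0 rB0 rC0) => e e0.
have rB_gt : specrad (cmx B) < specrad (cmx B) + e by rewrite ltrDl.
have rC_gt : specrad (cmx C) < specrad (cmx C) + e by rewrite ltrDl.
apply: le_trans (normc_eigenvalue_le rB_gt rC_gt Az) _.
by rewrite lerDl ltW.
Qed.

Lemma normc_invmx_1B_le i j :
  specrad A < 1 -> specrad (cmx B) < 1 -> specrad (cmx C) < 1 ->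
  normc (invmx (1%:M - A) i j) <=
    Num.sqrt (invmx (1%:M - B) i j) * Num.sqrt (invmx (1%:M - C) i j).
Proof.
move=> ltA ltB ltC.
apply: (ler_sqrtM_addgt0 (invmx_1B_ge0 B0 ltB i j) (invmx_1B_ge0 C0 ltC i j)) => d d0.
have [NA HA] := normc_invmx_1B_le_partial i j ltA d0.
have [NB HB] := sum_powmx_le_invmx i j ltB d0.
have [NC HC] := sum_powmx_le_invmx i j ltC d0.
pose N := maxn NA (maxn NB NC).
apply: le_trans (HA N (leq_maxl _ _)) _; rewrite lerD2r.
apply: le_trans (_ : _ <= \sum_(k < N) Num.sqrt ((B ^+ k) i j) * Num.sqrt ((C ^+ k) i j)) _.
  by apply: ler_sum => k _; exact: normc_powmx_le.
apply: le_trans (sum_sqrtM_le (fun k => powmx_ge0 k B0 i j) (fun k => powmx_ge0 k C0 i j)) _.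
apply: ler_pM; rewrite ?sqrtr_ge0 // ler_wsqrtr //.
  by apply: HB; rewrite leq_max leq_maxl orbT.
by apply: HC; rewrite leq_max leq_maxr !orbT.
Qed.

Lemma normInfC_invmx_1B_le :
  specrad A < 1 -> specrad (cmx B) < 1 -> specrad (cmx C) < 1 ->
  normInfC (invmx (1%:M - A)) <=
    Num.sqrt (normInfR (invmx (1%:M - B))) * Num.sqrt (normInfR (invmx (1%:M - C))).
Proof.
move=> ltA ltB ltC; apply: bigmax_le => [|i _]; first by rewrite mulr_ge0 ?sqrtr_ge0.
apply: le_trans (_ : _ <= \sum_j Num.sqrt (invmx (1%:M - B) i j) *
                            Num.sqrt (invmx (1%:M - C) i j)) _.
  by apply: ler_sum => j _; exact: normc_invmx_1B_le.
apply: le_trans (sum_sqrtM_le (invmx_1B_ge0 B0 ltB i) (invmx_1B_ge0 C0 ltC i)) _.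
by apply: ler_pM; rewrite ?sqrtr_ge0 // ler_wsqrtr // row_sum_le_normInfR.
Qed.

End EntrywiseDomination.

Unset Implicit Arguments.

Theorem lemma8 (R : realType) (n : nat) (A : 'M[R[i]]_n) (B C : 'M[R]_n)
  (hB : forall i j, 0 <= B i j) (hC : forall i j, 0 <= C i j)
  (hA : forall i j, ComplexField.Normc.normc (A i j) <= Num.sqrt (B i j) * Num.sqrt (C i j)) :
  specrad A <= Num.sqrt (specrad (cmx B)) * Num.sqrt (specrad (cmx C)) /\
  (Num.max (specrad (cmx B)) (specrad (cmx C)) < 1 ->
     specrad A < 1 /\ (1%:M - A) \in unitmx /\
     normInfC (invmx (1%:M - A)) <=
       Num.sqrt (normInfR (invmx (1%:M - B))) * Num.sqrt (normInfR (invmx (1%:M - C)))).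
Proof.
have rhoA := specrad_le_sqrtM hB hC hA.
split; first exact: rhoA.
rewrite gt_max => /andP[ltB ltC].
(* Proved with nra: rewriting with [sqrtr1] would introduce the [1] of the
   derived [rcfType] instance, whose unification with the [1] of [R] is costly. *)
have sqrt_lt1 x : 0 <= x -> x < 1 -> Num.sqrt x < 1.
  by move=> x0 x1; have := sqr_sqrtr x0; have := sqrtr_ge0 x; rewrite expr2; nra.
have ltA : specrad A < 1.
  apply: le_lt_trans rhoA (mulr_ilt1 (sqrtr_ge0 _) (sqrtr_ge0 _) _ _).
    exact: sqrt_lt1 (specrad_ge0 _) ltB.
  exact: sqrt_lt1 (specrad_ge0 _) ltC.
split; first exact: ltA.
split; first exact: specrad_lt1_unitmx.
exact: (normInfC_invmx_1B_le hB hC hA ltA ltB ltC).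
Qed.
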